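(* Let $f$ be a pdf supported on $[-\tfrac14,\tfrac14]$. Then $$2\big(\mathrm{Re}\,\hat f(1)\big)^2-1\le\mathrm{Re}\,\hat f(2)\le 2\,\mathrm{Re}\,\hat f(1)-1.$$
   Context: $\mathbb{T}=\mathbb{R}/\mathbb{Z}$; $\hat f(j)=\int_{\mathbb{T}} f(x)e^{-2\pi ijx}\,dx$. A pdf is a nonnegative function in $L^2(\mathbb{T})$ with integral 1; $[-\tfrac14,\tfrac14]$ is regarded as a subset of $\mathbb{T}$. *)

(* The torus T = R/Z is modelled by its fundamental
   domain [-1/2, 1/2] with Lebesgue measure (endpoints are null). *)
From HB Require Import structures.
From mathcomp Require Import all_boot all_order all_algebra.
From mathcomp Require Import all_classical all_reals all_analysis.
Set Implicit Arguments. Unset Strict Implicit. Unset Printing Implicit Defensive.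
Import Order.TTheory GRing.Theory Num.Theory.
Local Open Scope classical_set_scope.
Local Open Scope ring_scope.

Definition torus_dom (R : realType) : set R := `[(- (1/2)) : R, 1/2]%classic.

Definition re_fourier (R : realType) (f : R -> R) (j : int) : R :=
  Rintegral (@lebesgue_measure R) (@torus_dom R)
    (fun x => f x * cos (2 * pi * j%:~R * x)).

Definition pdf_T (R : realType) (f : R -> R) : Prop :=
  [/\ measurable_fun (@torus_dom R) f,
      (forall x, @torus_dom R x -> 0 <= f x),
      (@lebesgue_measure R).-integrable (@torus_dom R) (fun x => ((f x) ^+ 2)%:E) &
      (\int[@lebesgue_measure R]_(x in @torus_dom R) (f x)%:E = 1)%E].

Definition supported_quarter (R : realType) (f : R -> R) : Prop :=
  forall x, @torus_dom R x -> 1/4 < `|x| -> f x = 0.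

(** Put [c x = cos (2 pi x)] and let [m1], [m2] be the first two moments of
    [c] under the density [f], so that [Re f^(1) = m1] and, by the
    double-angle formula, [Re f^(2) = 2 m2 - 1].  The lower bound is
    [m1 ^+ 2 <= m2], i.e. the variance of [c] is nonnegative.  The upper
    bound is [m2 <= m1]: on the support [|x| <= 1/4] of [f] we have
    [0 <= c <= 1], hence [c ^+ 2 <= c]. *)
From mathcomp Require Import all_boot all_order all_algebra.
From mathcomp Require Import all_classical all_reals all_analysis.
From mathcomp Require Import ring lra measurable_realfun.
Import Order.TTheory GRing.Theory Num.Theory.
Local Open Scope ring_scope.

Section density_moments.
Context {d} {T : measurableType d} {R : realType} {mu : measure T R}.
Context {D : set T} (mD : measurable D).

Lemma integrableZl_EFin (r : R) {h : T -> R} :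
  mu.-integrable D (EFin \o h) -> mu.-integrable D (EFin \o (fun x => r * h x)).
Proof.
move=> h_int; apply: (eq_integrable mD (fun x => r%:E * (EFin \o h) x)%E).
  by move=> x _; rewrite /= EFinM.
exact: integrableZl.
Qed.

Context {f : T -> R}.
Hypotheses (f_ge0 : forall x, D x -> 0 <= f x)
  (f_int : mu.-integrable D (EFin \o f))
  (f_mass1 : \int[mu]_(x in D) f x = 1).

Lemma sqr_density_mean_le {g : T -> R} :
  mu.-integrable D (EFin \o (fun x => f x * g x)) ->
  mu.-integrable D (EFin \o (fun x => f x * g x ^+ 2)) ->
  (\int[mu]_(x in D) (f x * g x)) ^+ 2 <= \int[mu]_(x in D) (f x * g x ^+ 2).
Proof.
move=> fg_int fg2_int; set m := \int[mu]_(x in D) (f x * g x).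
have var_ge0 : 0 <= \int[mu]_(x in D) (f x * (g x - m) ^+ 2).
  by apply: Rintegral_ge0 => x Dx; rewrite mulr_ge0 ?f_ge0 ?sqr_ge0.
have var_expand : \int[mu]_(x in D) (f x * (g x - m) ^+ 2) =
    \int[mu]_(x in D) (f x * g x ^+ 2) - 2 * m * m + m ^+ 2 * 1.
  rewrite -[in m ^+ 2 * 1]f_mass1 -(RintegralZl (m ^+ 2) mD f_int).
  rewrite -[2 * m * m](RintegralZl (2 * m) mD fg_int) -RintegralB ?integrableZl_EFin //.
  rewrite -RintegralD ?integrableZl_EFin //.
    by apply: eq_Rintegral => x _; ring.
  have := integrableB mD fg2_int (integrableZl_EFin (2 * m) fg_int).
  by apply: eq_integrable => // x _; rewrite /= EFinB.
by move: var_ge0; rewrite var_expand; lra.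
Qed.

Lemma density_mean_sqr_le_mean {g : T -> R} :
  mu.-integrable D (EFin \o (fun x => f x * g x)) ->
  mu.-integrable D (EFin \o (fun x => f x * g x ^+ 2)) ->
  (forall x, D x -> f x != 0 -> 0 <= g x <= 1) ->
  \int[mu]_(x in D) (f x * g x ^+ 2) <= \int[mu]_(x in D) (f x * g x).
Proof.
move=> fg_int fg2_int g01; apply: le_Rintegral => // x Dx.
have [->|fx0] := eqVneq (f x) 0; first by rewrite !mul0r.
have /andP[g0 g1] := g01 x Dx fx0.
by rewrite ler_wpM2l ?f_ge0 // expr2 ler_piMr.
Qed.

End density_moments.

Section torus.
Context {R : realType}.
Implicit Types (f : R -> R) (x : R).
Local Notation D := (@torus_dom R).

Lemma measurable_torus_dom : measurable (D : set (measurableTypeR R)).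
Proof. exact: measurable_itv. Qed.

Definition cos2pi x : R := cos (2 * pi * x).

Lemma measurable_cos2pi : measurable_fun setT cos2pi.
Proof.
apply: measurableT_comp; first (apply: continuous_measurable_fun; exact: continuous_cos).
by apply: measurable_funM => //; exact: measurable_cst.
Qed.

Lemma cos2pi_ge0 x : `|x| <= 1/4 -> 0 <= cos2pi x.
Proof.
rewrite ler_norml => /andP[xge xle]; apply: cos_ge0_pihalf.
have pi_ge0 : 0 <= pi :> R by exact/ltW/pi_gt0.
by apply/andP; split; nra.
Qed.

Lemma cos2pi_double x : cos (2 * pi * 2%:~R * x) = 2 * cos2pi x ^+ 2 - 1.
Proof.
rewrite /cos2pi [2 * _ ^+ 2]mulr_natl -cos_mulr2n -mulr_natr.
by congr cos; ring.
Qed.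

Lemma pdf_T_integrable {f} : pdf_T f -> lebesgue_measure.-integrable D (EFin \o f).
Proof.
case=> mf f_ge0 _ f_mass1; apply/integrableP; split; first exact/measurable_EFinP.
under eq_integral => x /[!inE] Dx do rewrite /= ger0_norm ?f_ge0 //.
by rewrite f_mass1 ltry.
Qed.

Lemma pdf_T_mass1 {f} : pdf_T f -> \int[lebesgue_measure]_(x in D) f x = 1.
Proof. by case=> _ _ _ f_mass1; rewrite /Rintegral f_mass1. Qed.

Lemma pdf_T_integrable_cos2piX {f} n : pdf_T f ->
  lebesgue_measure.-integrable D (EFin \o (fun x => f x * cos2pi x ^+ n)).
Proof.
move=> pf; have cn_bounded : [bounded cos2pi x ^+ n | x in D].
  exists 1; split; first exact: num_real.
  move=> M M_gt1 x _ /=; rewrite normrX; apply/ltW/(le_lt_trans _ M_gt1).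
  by rewrite exprn_ile1 // ler_norml cos_le1 cos_geN1.
have mcn : measurable_fun D (fun x => cos2pi x ^+ n).
  by apply/measurable_funX/measurable_funTS; exact: measurable_cos2pi.
have -> : EFin \o (fun x => f x * cos2pi x ^+ n) =
    ((EFin \o f) \* (EFin \o (fun x => cos2pi x ^+ n)%R))%E.
  by apply/funext => x /=; rewrite EFinM.
apply: integrableMl => //; first exact: measurable_torus_dom.
exact: pdf_T_integrable.
Qed.

Lemma re_fourier1 f :
  re_fourier f 1 = \int[lebesgue_measure]_(x in D) (f x * cos2pi x).
Proof. by apply: eq_Rintegral => x _; rewrite /cos2pi mulr1. Qed.

Lemma re_fourier2 {f} : pdf_T f ->
  re_fourier f 2 =
    2 * \int[lebesgue_measure]_(x in D) (f x * cos2pi x ^+ 2) - 1.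
Proof.
move=> pf; have mD := measurable_torus_dom.
have c2_int := pdf_T_integrable_cos2piX 2 pf.
rewrite -[X in _ - X](pdf_T_mass1 pf) -(RintegralZl _ mD c2_int).
rewrite -RintegralB //; last exact: pdf_T_integrable.
  by apply: eq_Rintegral => x _; rewrite cos2pi_double; ring.
exact: integrableZl_EFin.
Qed.

End torus.

Theorem lemma2p17 (R : realType) (f : R -> R) :
  pdf_T f -> supported_quarter f ->
  2 * (re_fourier f 1) ^+ 2 - 1 <= re_fourier f 2 /\
  re_fourier f 2 <= 2 * re_fourier f 1 - 1.
Proof.
move=> pf supp; have [_ f_ge0 _ _] := pf.
have mD := @measurable_torus_dom R.
have f_int := pdf_T_integrable pf; have f_mass1 := pdf_T_mass1 pf.
have c_int : lebesgue_measure.-integrable (@torus_dom R)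
    (EFin \o (fun x => f x * cos2pi x)) := pdf_T_integrable_cos2piX 1 pf.
have c2_int := pdf_T_integrable_cos2piX 2 pf.
have c01 x : @torus_dom R x -> f x != 0 -> 0 <= cos2pi x <= 1.
  move=> Dx fx0; rewrite cos_le1 andbT cos2pi_ge0 //.
  by rewrite leNgt; apply: contra fx0 => /(supp x Dx) ->.
rewrite re_fourier2 // re_fourier1; split.
- by have := sqr_density_mean_le mD f_ge0 f_int f_mass1 c_int c2_int; lra.
- by have := density_mean_sqr_le_mean mD f_ge0 c_int c2_int c01; lra.
Qed.
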